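(* Let $\mu\in(0,1/2)$. For every $c<c_J$ the rotation number of the exterior collision orbit in the Moon component is greater than that in the Earth component: $R^E_{\text{ext}}(c)<R^M_{\text{ext}}(c)$.
   Context: $c_J=-1-2\sqrt{\mu(1-\mu)}$. $K(k)=\int_0^{\pi/2}(1-k^2\sin^2\theta)^{-1/2}d\theta$ is the complete elliptic integral of the first kind. $R^E_{\text{ext}}(c)=\frac{\pi}{2}\frac{1}{\sqrt{1-2k_E^2}K(k_E)}$ with $k_E^2=\frac12\big(1-\frac{1-2\mu-c}{\sqrt{c^2-2(1-2\mu)c+1}}\big)$, and $R^M_{\text{ext}}(c)=\frac{\pi}{2}\frac{1}{\sqrt{1-2k_M^2}K(k_M)}$ with $k_M^2=\frac12\big(1+\frac{c+1-2\mu}{\sqrt{c^2+2(1-2\mu)c+1}}\big)$; these are the ratios of $\eta$- to $\xi$-oscillation periods of the exterior collision orbits of the Euler problem (mass ratio $\mu$) near the Earth and near the Moon, respectively. *)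

From Stdlib Require Import Reals Lra ClassicalEpsilon.
Open Scope R_scope.

Definition is_RInt (f : R -> R) (a b v : R) : Prop :=
  exists pr : Riemann_integrable f a b, RiemannInt pr = v.

(* Complete elliptic integral of the first kind:
   K(k) = int_0^{pi/2} (1 - k^2 sin^2 theta)^(-1/2) dtheta.
   Chosen (by classical choice) as the Riemann integral when it exists. *)
Definition ellipK (k : R) : R :=
  epsilon (inhabits 0)
    (fun v => is_RInt (fun t => / sqrt (1 - k ^ 2 * (sin t) ^ 2)) 0 (PI / 2) v).

Definition cJ (mu : R) : R := -1 - 2 * sqrt (mu * (1 - mu)).

Definition kE2 (mu c : R) : R :=
  / 2 * (1 - (1 - 2 * mu - c) / sqrt (c ^ 2 - 2 * (1 - 2 * mu) * c + 1)).

Definition kM2 (mu c : R) : R :=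
  / 2 * (1 + (c + 1 - 2 * mu) / sqrt (c ^ 2 + 2 * (1 - 2 * mu) * c + 1)).

Definition RextE (mu c : R) : R :=
  (PI / 2) / (sqrt (1 - 2 * kE2 mu c) * ellipK (sqrt (kE2 mu c))).

Definition RextM (mu c : R) : R :=
  (PI / 2) / (sqrt (1 - 2 * kM2 mu c) * ellipK (sqrt (kM2 mu c))).

(* Both rotation numbers have the form (pi/2) / (sqrt (1 - 2 m) K(sqrt m)) with
   0 <= m < 1/2, and sqrt (1 - 2 m) K(sqrt m) is the integral over [0, pi/2] of
   sqrt ((1 - 2 m) / (1 - m sin^2 t)), whose integrand strictly decreases in m
   because (1 - 2 m) / (1 - m s) does for every s < 2.  It therefore suffices to
   show that the Earth modulus kE2 is smaller than the Moon modulus kM2; after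
   clearing the square roots this reduces to the polynomial identity
   (a - c)^2 (c^2 + 2 a c + 1) - (a + c)^2 (c^2 - 2 a c + 1) = 4 a c (a^2 - 1)
   with a = 1 - 2 mu. *)

From Stdlib Require Import Reals Lra ClassicalEpsilon.
From Coquelicot Require Import Coquelicot.
Open Scope R_scope.

Definition ellipK_integrand (m t : R) : R := / sqrt (1 - m * sin t ^ 2).

Lemma sin_sqr_bound (t : R) : 0 <= sin t ^ 2 <= 1.
Proof. pose proof (SIN_bound t). nra. Qed.

Lemma ellipK_integrand_continuous (m t : R) :
  0 <= m < 1 -> continuous (ellipK_integrand m) t.
Proof.
  intros Hm.
  apply (ex_derive_continuous (K := R_AbsRing) (V := R_NormedModule)).
  unfold ellipK_integrand.
  pose proof (sin_sqr_bound t).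
  assert (0 < 1 - m * sin t ^ 2) by nra.
  auto_derive. repeat split; [lra |].
  apply Rgt_not_eq, sqrt_lt_R0; lra.
Qed.

Lemma ex_RInt_ellipK_integrand (m : R) :
  0 <= m < 1 -> ex_RInt (ellipK_integrand m) 0 (PI / 2).
Proof.
  intros Hm. apply (ex_RInt_continuous (V := R_CompleteNormedModule)).
  intros t _. now apply ellipK_integrand_continuous.
Qed.

Lemma ellipK_sqrt_RInt (m : R) :
  0 <= m < 1 -> ellipK (sqrt m) = RInt (ellipK_integrand m) 0 (PI / 2).
Proof.
  intros Hm. unfold ellipK. rewrite pow2_sqrt by lra.
  match goal with |- epsilon _ ?P = _ => set (Int := P) end.
  assert (HInt : exists v, Int v).
  { exists (RInt (ellipK_integrand m) 0 (PI / 2)).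
    pose proof (ex_RInt_Reals_0 _ _ _ (ex_RInt_ellipK_integrand m Hm)) as pr.
    exists pr. symmetry. apply RInt_Reals. }
  destruct (epsilon_spec (inhabits 0) Int HInt) as [pr <-].
  symmetry. apply (RInt_Reals (ellipK_integrand m)).
Qed.

Lemma modulus_ratio_decreasing (m1 m2 s : R) :
  0 <= m1 < m2 -> m2 < / 2 -> 0 <= s <= 1 ->
  (1 - 2 * m2) / (1 - m2 * s) < (1 - 2 * m1) / (1 - m1 * s).
Proof.
  intros Hm1 Hm2 Hs.
  assert (0 < 1 - m2 * s) by nra.
  assert (0 < 1 - m1 * s) by nra.
  apply (Rmult_lt_reg_r ((1 - m2 * s) * (1 - m1 * s))); [nra |].
  replace ((1 - 2 * m2) / (1 - m2 * s) * ((1 - m2 * s) * (1 - m1 * s)))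
    with ((1 - 2 * m2) * (1 - m1 * s)) by (field; lra).
  replace ((1 - 2 * m1) / (1 - m1 * s) * ((1 - m2 * s) * (1 - m1 * s)))
    with ((1 - 2 * m1) * (1 - m2 * s)) by (field; lra).
  nra.
Qed.

Lemma scaled_ellipK_integrand_eq (m t : R) :
  0 <= m < 1 ->
  sqrt (1 - 2 * m) * ellipK_integrand m t = sqrt ((1 - 2 * m) / (1 - m * sin t ^ 2)).
Proof.
  intros Hm. pose proof (sin_sqr_bound t).
  unfold ellipK_integrand. rewrite sqrt_div_alt by nra. reflexivity.
Qed.

Lemma scaled_ellipK_integrand_lt (m1 m2 t : R) :
  0 <= m1 < m2 -> m2 < / 2 ->
  sqrt (1 - 2 * m2) * ellipK_integrand m2 t < sqrt (1 - 2 * m1) * ellipK_integrand m1 t.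
Proof.
  intros Hm1 Hm2. pose proof (sin_sqr_bound t).
  rewrite !scaled_ellipK_integrand_eq by lra.
  apply sqrt_lt_1_alt. split.
  - apply Rdiv_le_0_compat; nra.
  - now apply modulus_ratio_decreasing.
Qed.

Definition scaled_ellipK (m : R) : R := sqrt (1 - 2 * m) * ellipK (sqrt m).

Lemma scaled_ellipK_RInt (m : R) : 0 <= m < 1 ->
  scaled_ellipK m = RInt (fun t => sqrt (1 - 2 * m) * ellipK_integrand m t) 0 (PI / 2).
Proof.
  intros Hm. unfold scaled_ellipK. rewrite ellipK_sqrt_RInt by exact Hm.
  symmetry. apply (RInt_scal (V := R_CompleteNormedModule)).
  now apply ex_RInt_ellipK_integrand.
Qed.

Lemma scaled_ellipK_integrand_continuous (m t : R) : 0 <= m < 1 ->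
  continuous (fun t => sqrt (1 - 2 * m) * ellipK_integrand m t) t.
Proof.
  intros Hm. apply (continuous_scal_r (K := R_AbsRing) (V := R_NormedModule)).
  now apply ellipK_integrand_continuous.
Qed.

Lemma scaled_ellipK_pos (m : R) : 0 <= m < / 2 -> 0 < scaled_ellipK m.
Proof.
  intros Hm. rewrite scaled_ellipK_RInt by lra.
  assert (Hzero : RInt (V := R_CompleteNormedModule) (fun _ => 0) 0 (PI / 2) = 0)
    by (rewrite RInt_const; apply Rmult_0_r).
  rewrite <- Hzero at 1.
  apply RInt_lt; [pose proof PI_RGT_0; lra | | |].
  - intros t _. apply scaled_ellipK_integrand_continuous; lra.
  - intros t _. apply continuous_const.
  - intros t _. change (0 < sqrt (1 - 2 * m) * ellipK_integrand m t).
    rewrite scaled_ellipK_integrand_eq by lra.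
    pose proof (sin_sqr_bound t).
    apply sqrt_lt_R0, Rdiv_lt_0_compat; nra.
Qed.

Lemma scaled_ellipK_decreasing (m1 m2 : R) :
  0 <= m1 < m2 -> m2 < / 2 -> scaled_ellipK m2 < scaled_ellipK m1.
Proof.
  intros Hm1 Hm2. rewrite !scaled_ellipK_RInt by lra.
  apply RInt_lt; [pose proof PI_RGT_0; lra | | |].
  - intros t _. apply scaled_ellipK_integrand_continuous; lra.
  - intros t _. apply scaled_ellipK_integrand_continuous; lra.
  - intros t _. now apply scaled_ellipK_integrand_lt.
Qed.

Lemma pow2_lt_reg (x y : R) : 0 <= y -> x ^ 2 < y ^ 2 -> x < y.
Proof. intros Hy Hxy. destruct (Rlt_or_le x y) as [Hlt | Hle]; [exact Hlt | nra]. Qed.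

Section Moduli.

Variables a c : R.
Hypothesis a_gt0 : 0 < a.
Hypothesis a_lt1 : a < 1.
Hypothesis c_lt : c < - a.

Let SE := sqrt (c ^ 2 - 2 * a * c + 1).
Let SM := sqrt (c ^ 2 + 2 * a * c + 1).

Lemma earth_radicand_gt_sqr : (a - c) ^ 2 < c ^ 2 - 2 * a * c + 1.
Proof. nra. Qed.

Lemma moon_radicand_gt_sqr : (c + a) ^ 2 < c ^ 2 + 2 * a * c + 1.
Proof. nra. Qed.

Lemma SE_sqr : SE ^ 2 = c ^ 2 - 2 * a * c + 1.
Proof. apply pow2_sqrt. pose proof earth_radicand_gt_sqr. nra. Qed.

Lemma SM_sqr : SM ^ 2 = c ^ 2 + 2 * a * c + 1.
Proof. apply pow2_sqrt. pose proof moon_radicand_gt_sqr. nra. Qed.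

Lemma SE_gt0 : 0 < SE.
Proof. apply sqrt_lt_R0. pose proof earth_radicand_gt_sqr. nra. Qed.

Lemma SM_gt0 : 0 < SM.
Proof. apply sqrt_lt_R0. pose proof moon_radicand_gt_sqr. nra. Qed.

Lemma earth_ratio_lt1 : (a - c) / SE < 1.
Proof.
  pose proof earth_radicand_gt_sqr; pose proof SE_gt0; pose proof SE_sqr.
  assert (Hlt : a - c < SE) by (apply pow2_lt_reg; lra).
  apply (Rmult_lt_reg_r SE); [lra |].
  replace ((a - c) / SE * SE) with (a - c) by (field; lra). lra.
Qed.

Lemma moon_ratio_neg : (c + a) / SM < 0.
Proof. apply Rdiv_neg_pos; [lra | exact SM_gt0]. Qed.

Lemma opp_moon_ratio_lt_earth_ratio : - ((c + a) / SM) < (a - c) / SE.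
Proof.
  pose proof SE_gt0; pose proof SM_gt0; pose proof SE_sqr; pose proof SM_sqr.
  assert (Hid : (a - c) ^ 2 * (c ^ 2 + 2 * a * c + 1)
                - (c + a) ^ 2 * (c ^ 2 - 2 * a * c + 1) = 4 * a * (- c) * (1 - a ^ 2))
    by ring.
  assert (Hpos : 0 < 4 * a * (- c) * (1 - a ^ 2)) by (apply Rmult_lt_0_compat; nra).
  assert (Hsq : ((- (c + a)) * SE) ^ 2 < ((a - c) * SM) ^ 2)
    by (rewrite !Rpow_mult_distr; nra).
  assert (Hlt : - (c + a) * SE < (a - c) * SM) by (apply pow2_lt_reg; nra).
  apply (Rmult_lt_reg_r (SE * SM)); [nra |].
  replace (- ((c + a) / SM) * (SE * SM)) with (- (c + a) * SE) by (field; lra).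
  replace ((a - c) / SE * (SE * SM)) with ((a - c) * SM) by (field; lra).
  exact Hlt.
Qed.

Let kE := / 2 * (1 - (a - c) / SE).
Let kM := / 2 * (1 + (c + a) / SM).

Lemma earth_modulus_ge0 : 0 <= kE.
Proof. pose proof earth_ratio_lt1. unfold kE; lra. Qed.

Lemma earth_modulus_lt_moon_modulus : kE < kM.
Proof. pose proof opp_moon_ratio_lt_earth_ratio. unfold kE, kM; lra. Qed.

Lemma moon_modulus_lt_half : kM < / 2.
Proof. pose proof moon_ratio_neg. unfold kM; lra. Qed.

End Moduli.

Theorem mainTheorem8 (mu c : R) (Hmu0 : 0 < mu) (Hmu1 : mu < / 2)
  (Hc : c < cJ mu) : RextE mu c < RextM mu c.
Proof.
  assert (Hc' : c < - (1 - 2 * mu)).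
  { unfold cJ in Hc. pose proof (sqrt_pos (mu * (1 - mu))). lra. }
  assert (Ha0 : 0 < 1 - 2 * mu) by lra.
  assert (Ha1 : 1 - 2 * mu < 1) by lra.
  pose proof (earth_modulus_ge0 _ _ Ha0 Ha1 Hc') as HE.
  pose proof (earth_modulus_lt_moon_modulus _ _ Ha0 Ha1 Hc') as HEM.
  pose proof (moon_modulus_lt_half _ _ Ha0 Ha1 Hc') as HM.
  replace (c + (1 - 2 * mu)) with (c + 1 - 2 * mu) in HEM, HM by ring.
  fold (kE2 mu c) (kM2 mu c) in HE, HEM, HM.
  apply Rmult_lt_compat_l; [pose proof PI_RGT_0; lra |].
  apply Rinv_lt_contravar.
  - apply Rmult_lt_0_compat; apply scaled_ellipK_pos; lra.
  - apply scaled_ellipK_decreasing; lra.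
Qed.
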